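(* Let $m$ and $n$ be powers of $2$ with $m \ge 16$, $n \ge 4$ and $m \le 4n$, and let $$G = G(m,n) := \langle a, b \mid a^m = 1,\ b^n = 1,\ [b,a] = a^4 \rangle.$$ Let $N = \langle a^4 \rangle$. Then: - $N$ is a characteristic subgroup of $G$; - $G/N$ is abelian; - there is no automorphism $\alpha$ of $G$ whose induced automorphism on $G/N$ is the inversion map $gN \mapsto g^{-1}N$.
   Context: Commutators are $[x,y] = x^{-1}y^{-1}xy$. *)

From mathcomp Require Import all_boot all_fingroup.
Set Implicit Arguments.
Unset Strict Implicit.
Unset Printing Implicit Defensive.

From mathcomp Require Import all_boot all_fingroup.
From mathcomp Require Import all_algebra all_solvable.
From mathcomp Require Import ring.
Set Implicit Arguments.
Unset Strict Implicit.
Unset Printing Implicit Defensive.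
Import GRing.Theory.
Local Open Scope group_scope.

(* The quotient G / <[a ^+ 4]> is abelian and generated by the images of a and
   b, and <[a ^+ 4]> is the derived subgroup of G, hence characteristic.  If an
   automorphism alpha induced inversion on G / <[a ^+ 4]>, then c := alpha a
   lies in a^-1 <[a ^+ 4]>, a subgroup of <[a]>, and d := alpha b lies in
   b^-1 <[a ^+ 4]>; as <[a]> is abelian, d acts on <[a]> as b^-1 does.  Now b
   acts on <[a]> by x |-> x^-3, and the relation [d, c] = c^4 forces
   c^d = c^-3, whence c = (c^-3)^b = c^9, i.e. a^8 = 1.  Then
   |G| <= #[a] #[b] <= 8n, whereas the permutations (i, j) |-> (i + 1, j) and
   (i, j) |-> (13 i, j + 1) of Z/16 x Z/n satisfy the defining relations (as
   16 | m and 4 | n) and act transitively, so that |G| >= 16n. *)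

Section PermRepresentation.

Variable n : nat.
Hypothesis n_gt1 : (1 < n)%N.
Hypothesis dvd4n : (4 %| n)%N.

Local Notation T := ('Z_16 * 'Z_n)%type.

Lemma Z16_mul5_13 : (5 * 13 = 1 :> 'Z_16)%R. Proof. by apply/val_inj. Qed.
Lemma Z16_char : (16%:R = 0 :> 'Z_16)%R. Proof. by apply/val_inj. Qed.

Definition shift1 (p : T) : T := (p.1 + 1, p.2)%R.
Definition scale13_shift2 (p : T) : T := (13 * p.1, p.2 + 1)%R.

Lemma shift1_inj : injective shift1.
Proof.
move=> [i j] [i' j'] e; have /= /addIr-> := congr1 fst e.
by have /= -> := congr1 snd e.
Qed.

Lemma scale13_shift2_inj : injective scale13_shift2.
Proof.
move=> [i j] [i' j'] e; have /= e13 := congr1 fst e.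
have /= /addIr-> := congr1 snd e; congr (_, _).
by rewrite -[i]mul1r -[i']mul1r -Z16_mul5_13 -!mulrA e13.
Qed.

Definition rep_a : {perm T} := perm shift1_inj.
Definition rep_b : {perm T} := perm scale13_shift2_inj.

Lemma rep_aX k p : (rep_a ^+ k) p = (p.1 + k%:R, p.2)%R.
Proof.
elim: k p => [|k IHk] [i j]; first by rewrite expg0 perm1 addr0.
by rewrite expgSr permM IHk permE /shift1 /= -addrA -natr1.
Qed.

Lemma rep_bX k p : (rep_b ^+ k) p = (13 ^+ k * p.1, p.2 + k%:R)%R.
Proof.
elim: k p => [|k IHk] [i j]; first by rewrite expg0 perm1 addr0 expr0 mul1r.
by rewrite expgSr permM IHk permE /scale13_shift2 /= -addrA natr1 exprS mulrA.
Qed.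

Lemma rep_aV p : (rep_a^-1) p = (p.1 - 1, p.2)%R.
Proof.
by apply: (@perm_inj _ rep_a); rewrite permKV permE /shift1 subrK; case: p.
Qed.

Lemma rep_bV p : (rep_b^-1) p = (5 * p.1, p.2 - 1)%R.
Proof.
apply: (@perm_inj _ rep_b); rewrite permKV permE /scale13_shift2 /=.
by case: p => i j /=; rewrite subrK mulrA [(13 * _)%R]mulrC Z16_mul5_13 mul1r.
Qed.

Lemma rep_aX_dvd16 m : (16 %| m)%N -> rep_a ^+ m = 1.
Proof.
case/dvdnP=> q ->; apply/permP=> p.
by rewrite rep_aX perm1 natrM Z16_char mulr0 addr0; case: p.
Qed.

Lemma rep_bXn : rep_b ^+ n = 1.
Proof.
have e13 : (13 ^+ n = 1 :> 'Z_16)%R.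
  have e13_4 : (13 ^+ 4 = 1 :> 'Z_16)%R by apply/val_inj.
  by case/dvdnP: dvd4n => q ->; rewrite mulnC exprM e13_4 expr1n.
by apply/permP=> p; rewrite rep_bX perm1 pchar_Zp // e13 mul1r addr0; case: p.
Qed.

Lemma rep_comm : [~ rep_b, rep_a] = rep_a ^+ 4.
Proof.
apply/permP=> [[i j]]; rewrite /commg /conjg !permM rep_bV rep_aV !permE.
rewrite /shift1 /scale13_shift2 /=; congr (_, _); last by rewrite subrK.
apply/eqP; rewrite -subr_eq0; apply/eqP.
transitivity (16%:R * (4 * i - 1) : 'Z_16)%R; first by ring.
by rewrite Z16_char mul0r.
Qed.

Lemma rep_orbit0 (p : T) : (rep_b ^+ p.2 * rep_a ^+ p.1) (0, 0)%R = p.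
Proof. by rewrite permM rep_bX rep_aX /= mulr0 !add0r !natr_Zp; case: p. Qed.

Lemma card_rep_ge : (16 * n <= #|<[rep_a]> <*> <[rep_b]>|)%N.
Proof.
pose f (p : T) := rep_b ^+ p.2 * rep_a ^+ p.1.
have f_inj : injective f.
  by apply: (@can_inj _ _ f (fun s => s (0, 0)%R)) rep_orbit0.
have <- : #|f @: [set: T]| = (16 * n)%N.
  by rewrite card_imset // cardsT card_prod !card_ord !Zp_cast.
apply: subset_leq_card; apply/subsetP=> _ /imsetP[p _ ->].
by rewrite groupM ?groupX // mem_gen // inE cycle_id ?orbT.
Qed.

Lemma card_presentation_ge m (gT : finGroupType) (G : {group gT}) :
    (16 %| m)%N -> G \isog Grp (x : y : x ^+ m, y ^+ n, [~ y, x] = x ^+ 4) ->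
  (16 * n <= #|G|)%N.
Proof.
move=> dvd16m isoG; pose H := (<[rep_a]> <*> <[rep_b]>)%G.
have homH : H \homg Grp (x : y : x ^+ m, y ^+ n, [~ y, x] = x ^+ 4).
  apply/existsP; exists (rep_a, rep_b); rewrite /= !xpair_eqE /=.
  by rewrite rep_aX_dvd16 // rep_bXn rep_comm !eqxx.
have := isoG _ H; rewrite homH => /card_homg/dvdn_leq le_HG.
exact: leq_trans card_rep_ge (le_HG (cardG_gt0 _)).
Qed.

End PermRepresentation.

Lemma dvdn_pow2 i m :
  (exists k, m = 2 ^ k)%N -> (2 ^ i <= m)%N -> (2 ^ i %| m)%N.
Proof. by case=> k ->; rewrite leq_exp2l // => /dvdn_exp2l. Qed.

Section Conjugation.

Variable gT : finGroupType.
Implicit Types x y c : gT.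

Lemma conjg_commgX x y k : [~ y, x] = x ^+ k.+1 -> x ^ y = x ^- k.
Proof.
move=> yx; have xVy : (x^-1) ^ y = x ^+ k.
  by apply: (@mulIg _ x); rewrite -commgEr yx expgSr.
by rewrite -{1}[x]invgK conjVg xVy.
Qed.

Lemma conjg_cycle_expgVn x y c k :
  x ^ y = x ^- k -> c \in <[x]> -> c ^ y = c ^- k.
Proof. by move=> xy /cycleP[i ->]; rewrite conjXg xy expVgn expgAC. Qed.

Lemma expg8_conjgV3 c y : c ^ y = c ^- 3 -> c ^ y^-1 = c ^- 3 -> c ^+ 8 = 1.
Proof.
move=> cy cyV; have c9 : c ^+ 9 = c.
  by rewrite -{2}(conjgKV y c) cyV conjVg conjXg cy -expVgn invgK -expgM.
by apply: (@mulIg _ c); rewrite mul1g -expgSr.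
Qed.

Lemma mulg_in_coset_invg (N : {group gT}) x y :
  x \in 'N(N) -> y \in 'N(N) -> coset N x = (coset N y)^-1 -> x * y \in N.
Proof.
move=> Nx Ny xy; apply: coset_idr; first by rewrite groupM.
by rewrite morphM //= xy mulVg.
Qed.

End Conjugation.

Section Relations.

Variables (gT : finGroupType) (a b : gT).
Hypothesis ba : [~ b, a] = a ^+ 4.

Local Notation G := (<[a]> <*> <[b]>).
Local Notation N := <[a ^+ 4]>.

Lemma conjg_rel : a ^ b = a ^- 3. Proof. exact: conjg_commgX. Qed.

Lemma rel_norm : G \subset 'N(N).
Proof.
rewrite join_subG !norms_cycle conjXg conjgE mulKg cycle_id /=.
by rewrite (conjg_cycle_expgVn conjg_rel) ?mem_cycle // groupV mem_cycle.
Qed.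

Lemma rel_quotient_abelian : abelian (G / N).
Proof.
have [nNa nNb] : a \in 'N(N) /\ b \in 'N(N).
  by apply/andP; rewrite -!cycle_subG -join_subG rel_norm.
rewrite quotientY ?cycle_subG // !quotient_cycle // abelianY !cycle_abelian /=.
apply: cents_cycle; apply/commgP.
by rewrite -morphR // ba /= coset_id ?cycle_id.
Qed.

Lemma rel_der1 : G^`(1) = N.
Proof.
apply/eqP; rewrite eqEsubset der1_min ?rel_norm ?rel_quotient_abelian //=.
by rewrite cycle_subG -ba mem_commg // mem_gen // inE cycle_id ?orbT.
Qed.

Lemma rel_expg8 c d :
  [~ d, c] = c ^+ 4 -> c * a \in N -> d * b \in N -> c ^+ 8 = 1.
Proof.
have sNa : N \subset <[a]> by rewrite cycle_subG mem_cycle.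
move=> dc /(subsetP sNa) caA /(subsetP sNa) dbA.
have cA : c \in <[a]> by rewrite -(mulgK a c) groupM ?groupV ?cycle_id.
apply: (@expg8_conjgV3 _ c b); first exact: conjg_cycle_expgVn conjg_rel cA.
have /conjg_fixP cdb : [~ c, d * b] == 1.
  by apply/commgP; apply: (centsP (cycle_abelian a)).
by rewrite -(conjg_commgX dc) -[d](mulgK b) conjgM cdb.
Qed.

Lemma card_rel_le : (#|G| <= #[a] * #[b])%N.
Proof.
have nAb : b \in 'N(<[a]>).
  by rewrite -cycle_subG norms_cycle conjg_rel groupV mem_cycle.
rewrite norm_joinEr ?cycle_subG // /order mul_cardG.
by apply: leq_pmulr; apply: cardG_gt0.
Qed.

End Relations.

Theorem lemma3 (gT : finGroupType) (G : {group gT}) (a b : gT) (m n : nat) :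
  (exists k, m = 2 ^ k)%N -> (exists k, n = 2 ^ k)%N ->
  (16 <= m)%N -> (4 <= n)%N -> (m <= 4 * n)%N ->
  G \isog Grp (x : y : x ^+ m, y ^+ n, [~ y, x] = x ^+ 4) ->
  <[a]> <*> <[b]> = G -> a ^+ m = 1 -> b ^+ n = 1 -> [~ b, a] = a ^+ 4 ->
  let N := <[a ^+ 4]> in
  [/\ N \char G, abelian (G / N) &
      ~ exists2 alpha : {perm gT}, alpha \in Aut G &
          {in G, forall g, coset N (alpha g) = (coset N g)^-1}].
Proof.
move=> pow2m pow2n m_ge16 n_ge4 _ isoG defG _ bn ba N.
have n_gt1 : (1 < n)%N by apply: leq_trans n_ge4.
have le_16n_G := card_presentation_ge n_gt1
  (@dvdn_pow2 2 n pow2n n_ge4) (@dvdn_pow2 4 m pow2m m_ge16) isoG.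
rewrite /N -defG in le_16n_G *; split; first by rewrite -(rel_der1 ba) der_char.
  exact: rel_quotient_abelian ba.
case=> alpha Aut_alpha alphaV.
have [aG bG] : a \in <[a]> <*> <[b]> /\ b \in <[a]> <*> <[b]>.
  by split; rewrite mem_gen // inE cycle_id ?orbT.
have nNG := subsetP (rel_norm ba).
have alphaM := autmE Aut_alpha.
have a8 : a ^+ 8 = 1.
  apply: (@perm_inj _ alpha); rewrite -alphaM morphX //= morph1 alphaM.
  apply: (rel_expg8 ba (d := alpha b)).
  - by rewrite -alphaM -morphR //= ba morphX.
  - by rewrite mulg_in_coset_invg ?alphaV ?nNG ?Aut_closed.
  - by rewrite mulg_in_coset_invg ?alphaV ?nNG ?Aut_closed.
have le_a8 : (#[a] <= 8)%N by apply: dvdn_leq; rewrite ?order_dvdn ?a8.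
have le_bn : (#[b] <= n)%N by apply: dvdn_leq; rewrite ?order_dvdn ?bn // ltnW.
have := leq_trans le_16n_G (leq_trans (card_rel_le ba) (leq_mul le_a8 le_bn)).
by rewrite leq_pmul2r // ltnW.
Qed.
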